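(* Let $H\in\mathbb R^{n\times n}$, $f\in\mathbb R^n$, $A\in\mathbb R^{m\times n}$, $b\in\mathbb R^m$, with $\mathcal X=\{x: Ax\le b\}$ nonempty and $H+H^\top$ positive definite. Let $x^*$ be the unique solution of the AVI: find $x\in\mathcal X$ with $(Hx+f)^\top(y-x)\ge0$ for all $y\in\mathcal X$, let $\mathcal A=\{i: A_ix^*=b_i\}$, assume the rows of $A_{\mathcal A}$ are linearly independent, let $\lambda^*$ be the unique vector with $Hx^*+f+A^\top\lambda^*=0$, $0\le\lambda^*\perp b-Ax^*\ge0$, and assume $\lambda^*_i>0$ for all $i\in\mathcal A$. Fix $\rho>0$. Then there is a neighborhood $U$ of $x^*$ such that for all $z\in U$, $\mathcal A_{\mathrm{QP}}(z)=\mathcal A$.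
   Context: $A_i$, $b_i$ are the $i$-th row of $A$ and entry of $b$; $A_{\mathcal S}$ is the submatrix of rows indexed by $\mathcal S$. $H_s=\tfrac12(H+H^\top)$, $\tilde H=\rho I+H_s$, $\tilde f(z)=f+(H-\tilde H)z$. For $z\in\mathbb R^n$, $\mathcal S_x(z)$ is the unique minimizer of the quadratic program $\min_x\tfrac12x^\top\tilde Hx+\tilde f(z)^\top x$ subject to $Ax\le b$, and $\mathcal A_{\mathrm{QP}}(z)=\{i\in\{1,\dots,m\}: A_i\mathcal S_x(z)=b_i\}$ is its active set. *)

From HB Require Import structures.
From mathcomp Require Import all_boot all_order all_algebra.
From mathcomp Require Import all_classical all_reals all_analysis.
Set Implicit Arguments. Unset Strict Implicit. Unset Printing Implicit Defensive.
Import Order.TTheory GRing.Theory Num.Theory.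
Local Open Scope ring_scope.

Section QPDefs.
Variables (R : realType) (n m : nat).
Implicit Types (H : 'M[R]_n) (A : 'M[R]_(m, n)) (b : 'cV[R]_m) (x y z f : 'cV[R]_n).

Definition qform (x : 'cV[R]_n) (M : 'M[R]_n) (y : 'cV[R]_n) : R := (x^T *m M *m y) 0 0.
Definition dotv (x y : 'cV[R]_n) : R := (x^T *m y) 0 0.

Definition posdef (M : 'M[R]_n) : Prop := forall x : 'cV[R]_n, x != 0 -> 0 < qform x M x.

Definition feasible A b x : Prop := forall i : 'I_m, (A *m x) i 0 <= b i 0.

Definition AVI_sol H f A b x : Prop :=
  feasible A b x /\ forall y, feasible A b y -> 0 <= dotv (H *m x + f) (y - x).

Definition active A b x : {set 'I_m} := [set i | (A *m x) i 0 == b i 0].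

Definition Hsym H : 'M[R]_n := 2^-1 *: (H + H^T).
Definition Htil (rho : R) H : 'M[R]_n := rho%:M + Hsym H.
Definition ftil (rho : R) H f z : 'cV[R]_n := f + (H - Htil rho H) *m z.

Definition QPobj (rho : R) H f z x : R :=
  2^-1 * qform x (Htil rho H) x + dotv (ftil rho H f z) x.

Definition QPmin (rho : R) H f A b z x : Prop :=
  feasible A b x /\ forall y, feasible A b y -> QPobj rho H f z x <= QPobj rho H f z y.

Definition Sx (rho : R) H f A b z : 'cV[R]_n := xget 0 [set x | QPmin rho H f A b z x].

Definition AQP (rho : R) H f A b z : {set 'I_m} := active A b (Sx rho H f A b z).

End QPDefs.

(* Impose the constraints active at xs as equalities. Since Htil is positive
   definite and A_S has full row rank, the resulting KKT system of the QP at z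
   has an affine solution (x(z), mu(z)) passing through (xs, lam). Strict
   complementarity at xs (lam_S > 0, A_i xs < b_i off S) persists for z near
   xs by continuity, so (x(z), mu(z)) is a KKT pair of the full QP; by strict
   convexity x(z) = S_x(z), whose active set is therefore S. *)

From HB Require Import structures.
From mathcomp Require Import all_boot all_order all_algebra.
From mathcomp Require Import all_classical all_reals all_analysis.
From mathcomp Require Import lra.
Import Order.TTheory GRing.Theory Num.Theory numFieldNormedType.Exports.
Set Implicit Arguments.
Unset Strict Implicit.

Local Open Scope classical_set_scope.
Local Open Scope ring_scope.

Lemma mulmx_coord_continuous (R : numFieldType) (p q : nat) (N : 'M[R]_(p, q)) i :
  continuous (fun z : 'cV[R]_q => (N *m z) i 0).
Proof.
rewrite (_ : (fun z => _) = \sum_j (fun z : 'cV[R]_q => N i j * z j 0)); last first.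
  by apply/funext => z; rewrite fct_sumE mxE.
move=> z; apply: (big_ind (fun g : 'cV[R]_q -> R => {for z, continuous g})).
- exact: cst_continuous.
- by move=> g h gz hz; apply: continuousD.
- by move=> j _; apply: continuousM; [exact: cst_continuous | exact: coord_continuous].
Qed.

Lemma near_affine_coord_gt0 (R : realFieldType) (p q : nat) (N : 'M[R]_(p, q))
    (x0 : 'cV[R]_q) (c : R) i :
  0 < c -> \forall z \near x0, 0 < c + (N *m (z - x0)) i 0.
Proof.
move=> c_gt0.
have h_cont : {for x0, continuous (fun z : 'cV[R]_q => c + (N *m (z - x0)) i 0)}.
  rewrite (_ : (fun z => _) = (fun z : 'cV[R]_q => (N *m z) i 0) + cst (c - (N *m x0) i 0)).
    by apply: continuousD; [exact: mulmx_coord_continuous | exact: cst_continuous].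
  by apply/funext => z; rewrite fctE /= mulmxBr !mxE; lra.
by apply: (cvgr_gt _ h_cont); rewrite subrr mulmx0 mxE addr0.
Qed.

Section ConvexQP.
Variables (R : realType) (n : nat).
Implicit Types (K : 'M[R]_n) (x y d g : 'cV[R]_n).

Lemma qform_trmx x (M : 'M[R]_n) y : qform x M^T y = qform y M x.
Proof.
rewrite /qform.
have -> : y^T *m M *m x = (x^T *m M^T *m y)^T by rewrite !trmx_mul !trmxK mulmxA.
by rewrite [RHS]mxE.
Qed.

Lemma posdef_unitmx K : posdef K -> K \in unitmx.
Proof.
move=> K_pd; rewrite -row_free_unit -kermx_eq0; apply/rowV0P => v /sub_kermxP vK.
apply/eqP; apply: contraT; rewrite -trmx_eq0 => /K_pd.
by rewrite /qform trmxK vK mul0mx mxE ltxx.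
Qed.

Lemma posdef_invmx K : posdef K -> posdef (invmx K).
Proof.
move=> K_pd u u_neq0; set y := invmx K *m u.
have uE : u = K *m y by rewrite mulKVmx ?posdef_unitmx.
have y_neq0 : y != 0 by apply: contraNneq u_neq0 => y0; rewrite uE y0 mulmx0.
have := K_pd y y_neq0; rewrite -qform_trmx /qform.
by rewrite -trmx_mul -uE -[u^T *m _ *m u]mulmxA.
Qed.

Lemma quad_objD K g x d : K^T = K ->
  2^-1 * qform (x + d) K (x + d) + dotv g (x + d) =
  2^-1 * qform x K x + dotv g x + dotv (K *m x + g) d + 2^-1 * qform d K d.
Proof.
move=> K_sym; have Kdx : qform d K x = qform x K d by rewrite -qform_trmx K_sym.
have Kxd : dotv (K *m x) d = qform x K d by rewrite /dotv /qform trmx_mul K_sym.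
move: Kdx Kxd; rewrite /qform /dotv [(x + d)^T]linearD [(K *m x + g)^T]linearD /=.
rewrite !mulmxDl !mulmxDr !mxE => Kdx Kxd; lra.
Qed.

Lemma posdef_gram_unitmx (k : nat) (K : 'M[R]_n) (B : 'M[R]_(k, n)) :
  posdef K -> row_free B -> B *m invmx K *m B^T \in unitmx.
Proof.
move=> K_pd B_free; rewrite -row_free_unit -kermx_eq0; apply/rowV0P => v /sub_kermxP.
rewrite !mulmxA => vG.
have vB0 : (v *m B)^T == 0.
  apply: contraT => /(posdef_invmx K_pd).
  by rewrite /qform trmxK trmx_mul !mulmxA vG mul0mx mxE ltxx.
by apply/eqP; rewrite -(mulmx_free_eq0 _ B_free) -trmx_eq0.
Qed.

Lemma kkt_system_solvable (k p : nat) (K : 'M[R]_n)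
    (B : 'M[R]_(k, n)) (W : 'M[R]_(n, p)) :
  posdef K -> row_free B -> exists M1 M2, B *m M1 = 0 /\ K *m M1 + B^T *m M2 = W.
Proof.
move=> K_pd B_free; have K_unit := posdef_unitmx K_pd.
have G_unit := posdef_gram_unitmx K_pd B_free.
set G := B *m invmx K *m B^T in G_unit.
set M2 := invmx G *m (B *m invmx K *m W).
exists (invmx K *m (W - B^T *m M2)), M2; split; last by rewrite mulKVmx // subrK.
by rewrite mulmxA mulmxBr mulmxA -/G mulKVmx // subrr.
Qed.

Lemma trmx_Htil (rho : R) (H : 'M[R]_n) :
  (Htil rho H)^T = Htil rho H.
Proof.
by apply/matrixP => i j; rewrite /Htil /Hsym !mxE eq_sym [H j i + _]addrC.
Qed.

Lemma posdef_Htil (rho : R) (H : 'M[R]_n) :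
  0 < rho -> posdef (H + H^T) -> posdef (Htil rho H).
Proof.
move=> rho_gt0 H_pd x x_neq0.
have -> : qform x (Htil rho H) x = rho * dotv x x + 2^-1 * qform x (H + H^T) x.
  rewrite /qform /dotv /Htil /Hsym mulmxDr mulmxDl mul_mx_scalar.
  by rewrite -scalemxAl -scalemxAr -scalemxAl !mxE.
have xx_ge0 : 0 <= dotv x x.
  by rewrite /dotv mxE; apply: sumr_ge0 => i _; rewrite mxE -expr2 sqr_ge0.
by apply: ltr_wpDl; [exact/mulr_ge0/xx_ge0/ltW | exact/mulr_gt0/H_pd].
Qed.

Lemma kkt_strict_min (m : nat) (K : 'M[R]_n) (g : 'cV[R]_n)
    (A : 'M[R]_(m, n)) (b : 'cV[R]_m) (x : 'cV[R]_n) (mu : 'cV[R]_m) :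
  K^T = K -> posdef K -> (forall i, 0 <= mu i 0) ->
  (forall i, mu i 0 * (b i 0 - (A *m x) i 0) = 0) ->
  K *m x + g + A^T *m mu = 0 ->
  forall y, feasible A b y -> y != x ->
  2^-1 * qform x K x + dotv g x < 2^-1 * qform y K y + dotv g y.
Proof.
move=> K_sym K_pd mu_ge0 compl kkt y y_feas y_neq_x.
have d_neq0 : y - x != 0 by rewrite subr_eq0.
have -> : y = x + (y - x) by rewrite addrC subrK.
rewrite quad_objD //.
have grad : dotv (K *m x + g) (y - x) = - \sum_i mu i 0 * (A *m (y - x)) i 0.
  move/eqP: kkt; rewrite addr_eq0 => /eqP ->.
  rewrite /dotv linearN /= trmx_mul trmxK mulNmx -mulmxA mxE mxE.
  by congr (- _); apply: eq_bigr => i _; rewrite mxE.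
have descent : \sum_i mu i 0 * (A *m (y - x)) i 0 <= 0.
  apply: sumr_le0 => i _.
  have -> : (A *m (y - x)) i 0 = (A *m y) i 0 - (A *m x) i 0 by rewrite mulmxBr !mxE.
  by have := mu_ge0 i; have := y_feas i; have := compl i; nra.
by have := K_pd _ d_neq0; rewrite grad; lra.
Qed.

End ConvexQP.

Lemma Sx_kkt (R : realType) (n m : nat) (rho : R) (H : 'M[R]_n) (f : 'cV[R]_n)
    (A : 'M[R]_(m, n)) (b : 'cV[R]_m) (z x : 'cV[R]_n) (mu : 'cV[R]_m) :
  0 < rho -> posdef (H + H^T) -> feasible A b x -> (forall i, 0 <= mu i 0) ->
  (forall i, mu i 0 * (b i 0 - (A *m x) i 0) = 0) ->
  Htil rho H *m x + ftil rho H f z + A^T *m mu = 0 ->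
  Sx rho H f A b z = x.
Proof.
move=> rho_gt0 H_pd x_feas mu_ge0 compl kkt.
have strict := kkt_strict_min (trmx_Htil rho H) (posdef_Htil rho_gt0 H_pd) mu_ge0 compl kkt.
rewrite /Sx; apply: xget_unique.
  split=> // y y_feas; have [->|y_neq_x] := eqVneq y x; first exact: lexx.
  exact/ltW/strict.
move=> y [y_feas y_min]; apply/eqP; apply: contraT => y_neq_x.
by have := strict y y_feas y_neq_x; rewrite ltNge y_min.
Qed.

Section ActiveSetStability.
Variables (R : realType) (n m : nat) (H : 'M[R]_n) (f : 'cV[R]_n)
  (A : 'M[R]_(m, n)) (b : 'cV[R]_m) (xs : 'cV[R]_n) (lam : 'cV[R]_m) (rho : R).

Local Notation S := (active A b xs).
Local Notation K := (Htil rho H).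
Let e := @enum_val _ (mem S).
Let B := rowsub e A.
Let P := (rowsub e (1%:M : 'M[R]_m))^T.

Variables (M1 : 'M[R]_n) (M2 : 'M[R]_(#|S|, n)).
Hypotheses (BM1 : B *m M1 = 0) (KM1 : K *m M1 + B^T *m M2 = K - H).
Hypothesis kkt : H *m xs + f + A^T *m lam = 0.
Hypotheses (slack_ge0 : forall i, 0 <= b i 0 - (A *m xs) i 0)
  (compl : forall i, lam i 0 * (b i 0 - (A *m xs) i 0) = 0)
  (lam_gt0 : forall i, i \in S -> 0 < lam i 0).
Hypotheses (rho_gt0 : 0 < rho) (H_pd : posdef (H + H^T)).

(* KKT pair of the QP at z with the constraints in S kept active; K - H in KM1
   is the rate of change of - ftil rho H f z in z. *)
Definition xloc z := xs + M1 *m (z - xs).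
Definition muloc z := lam + P *m M2 *m (z - xs).

Lemma trA_mulP : A^T *m P = B^T.
Proof. by rewrite /B rowsubE trmx_mul. Qed.

Lemma mulP_inactive p (w : 'M[R]_(#|S|, p)) i j : i \notin S -> (P *m w) i j = 0.
Proof.
move=> iNS; rewrite mxE big1 // => k _; rewrite !mxE.
by rewrite (_ : e k == i = false) ?mul0r //; apply: contraNF iNS => /eqP <-; exact: enum_valP.
Qed.

Lemma muloc_inactive z i : i \notin S -> muloc z i 0 = 0.
Proof.
move=> iNS; rewrite /muloc -mulmxA mxE mulP_inactive // addr0.
have := compl i; move/eqP; rewrite mulf_eq0 subr_eq0 => /orP[/eqP //|].
by move: iNS; rewrite inE eq_sym => /negbTE ->.
Qed.

Lemma A_xloc_active z i : i \in S -> (A *m xloc z) i 0 = b i 0.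
Proof.
move=> iS; have A_xs : (A *m xs) i 0 = b i 0 by apply/eqP; rewrite inE in iS.
have AM1 : (A *m M1 *m (z - xs)) i 0 = 0.
  have : rowsub e (A *m M1 *m (z - xs)) = 0 by rewrite -!mul_rowsub_mx -/B BM1 mul0mx.
  move/matrixP/(_ (enum_rank_in iS i) 0); rewrite mxE /e (enum_rankK_in iS iS) => ->.
  by rewrite mxE.
by rewrite /xloc mulmxDr mulmxA mxE A_xs AM1 addr0.
Qed.

Lemma kkt_xloc z : K *m xloc z + ftil rho H f z + A^T *m muloc z = 0.
Proof.
rewrite /xloc /muloc /ftil.
have -> : (H - K) *m z = (H - K) *m xs + (H - K) *m (z - xs) by rewrite -mulmxDr subrKC.
move: (z - xs) => v.
have KM1v : K *m M1 *m v + B^T *m M2 *m v = K *m v - H *m v by rewrite -mulmxDl KM1 mulmxBl.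
rewrite !mulmxDr !mulmxBl !mulmxA trA_mulP.
apply/matrixP => i j; move/matrixP/(_ i j): kkt; move/matrixP/(_ i j): KM1v.
rewrite !mxE; lra.
Qed.

Lemma near_strict_compl : \forall z \near xs, forall i,
  (i \in S -> 0 < muloc z i 0) /\ (i \notin S -> (A *m xloc z) i 0 < b i 0).
Proof.
apply: (@filter_forall _ _ (fun i z => _) (nbhs xs) _) => i.
have [iS|iNS] := boolP (i \in S).
  apply: filterS (near_affine_coord_gt0 (P *m M2) xs i (lam_gt0 iS)) => z pos.
  by split=> // _; rewrite /muloc mxE.
have slack_gt0 : 0 < b i 0 - (A *m xs) i 0.
  by rewrite lt_neqAle slack_ge0 andbT eq_sym subr_eq0; move: iNS; rewrite inE eq_sym.
apply: filterS (near_affine_coord_gt0 (- (A *m M1)) xs i slack_gt0) => z.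
rewrite mulNmx [X in _ + X]mxE => pos; split=> // _.
rewrite /xloc mulmxDr mulmxA mxE; lra.
Qed.

Lemma near_Sx_xloc : \forall z \near xs, Sx rho H f A b z = xloc z.
Proof.
apply: filterS near_strict_compl => z strict.
have mu_compl i : muloc z i 0 * (b i 0 - (A *m xloc z) i 0) = 0.
  have [iS|iNS] := boolP (i \in S); first by rewrite A_xloc_active // subrr mulr0.
  by rewrite muloc_inactive // mul0r.
apply: (Sx_kkt rho_gt0 H_pd _ _ mu_compl (kkt_xloc z)) => i;
  have [iS|iNS] := boolP (i \in S); have [mu_pos slack_pos] := strict i.
- by rewrite A_xloc_active.
- exact/ltW/slack_pos.
- exact/ltW/mu_pos.
- by rewrite muloc_inactive.
Qed.

Lemma near_AQP_active : \forall z \near xs, AQP rho H f A b z = S.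
Proof.
apply: filterS2 near_Sx_xloc near_strict_compl => z Sx_eq strict.
rewrite /AQP Sx_eq; apply/setP => i; rewrite [in LHS]inE.
have [iS|iNS] := boolP (i \in S); first by rewrite A_xloc_active // eqxx.
by have [_ /(_ iNS)/lt_eqF->] := strict i.
Qed.

End ActiveSetStability.

Theorem lemma2 (R : realType) (n m : nat)
  (H : 'M[R]_n) (f : 'cV[R]_n) (A : 'M[R]_(m, n)) (b : 'cV[R]_m)
  (xs : 'cV[R]_n) (lam : 'cV[R]_m) (rho : R) :
  (exists x, feasible A b x) ->
  posdef (H + H^T) ->
  AVI_sol H f A b xs ->
  row_free (rowsub (@enum_val _ (mem (active A b xs))) A) ->
  H *m xs + f + A^T *m lam = 0 ->
  (forall i, 0 <= lam i 0) ->
  (forall i, 0 <= b i 0 - (A *m xs) i 0) ->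
  (forall i, lam i 0 * (b i 0 - (A *m xs) i 0) = 0) ->
  (forall i, i \in active A b xs -> 0 < lam i 0) ->
  0 < rho ->
  \forall z \near xs, AQP rho H f A b z = active A b xs.
Proof.
(* The KKT data determine xs. *)
move=> _ H_pd _ B_free kkt _ slack_ge0 compl lam_gt0 rho_gt0.
have [M1 [M2 [BM1 KM1]]] :=
  kkt_system_solvable (Htil rho H - H) (posdef_Htil rho_gt0 H_pd) B_free.
exact: near_AQP_active BM1 KM1 kkt slack_ge0 compl lam_gt0 rho_gt0 H_pd.
Qed.
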